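(* Let $\mathcal{X}=\{x_1,\dots,x_N\}$ and $\mathcal{Y}=\{y_1,\dots,y_M\}$ be finite alphabets, $P_X$ a probability mass function on $\mathcal{X}$ with full support, and $U=(u_{ij})$ an $N\times M$ matrix whose $i$-th row is a permutation of $\{1,\dots,M\}$; write $u(x_i,y_j)=u_{ij}$. Fix $h^*\in\{1,\dots,M\}$ and let $\mathcal{Y}^+(h^* )=\{y_j\in\mathcal{Y}:\exists i,\ u_{ij}\ge h^*\}$. Then the optimal value of the problem $$\min_{P_{Y|X}}\ \max_{y\in\mathcal{S}_Y}\ \ell_{P_{Y|X}\times P_X}(X\to y)$$ over all mechanisms $P_{Y|X}=(p_{ij})$ with $p_{ij}=0$ whenever $u_{ij}<h^*$ and with $\mathcal{S}_Y=\mathcal{Y}^+(h^* )$ (which is attained by the mechanism $M^*(h^* )$ with $[M^*(h^* )]_{ij}=0$ if $u_{ij}<h^*$ and $\frac{1}{M-h^*+1}$ otherwise) equals $$-\log\min_{y\in\mathcal{Y}^+(h^* )}\ \sum_{x\in\mathcal{X}:\,u(x,y)\ge h^*}P_X(x).$$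
   Context: A privacy mechanism is a conditional distribution $P_{Y|X}$, written as an $N\times M$ row-stochastic matrix with $p_{ij}=P_{Y|X=x_i}(y_j)$. With $P_Y(y)=\sum_x P_X(x)P_{Y|X=x}(y)$, the output support is $\mathcal{S}_Y=\{y:P_Y(y)>0\}$ and $P_{X|Y=y}(x)=P_{Y|X=x}(y)P_X(x)/P_Y(y)$. The pointwise maximal leakage of $y\in\mathcal{S}_Y$ is $\ell_{P_{Y|X}\times P_X}(X\to y)=\log\max_{x\in\mathcal{X}}\frac{P_{X|Y=y}(x)}{P_X(x)}$. The entry $u_{ij}=k$ means that the pair $(x_i,y_j)$ yields the $k$-th lowest utility value for input $x_i$. *)

From HB Require Import structures.
From mathcomp Require Import all_boot all_order all_algebra.
From mathcomp Require Import all_classical all_reals all_analysis.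
Set Implicit Arguments. Unset Strict Implicit. Unset Printing Implicit Defensive.
Import Order.TTheory GRing.Theory Num.Theory.
Local Open Scope ring_scope.

Section Defs.
Variables (R : realType) (N M : nat).

Definition full_pmf (PX : 'I_N -> R) : Prop :=
  (forall i, 0 < PX i) /\ \sum_(i < N) PX i = 1.

Definition utility_matrix (U : 'I_N -> 'I_M -> nat) : Prop :=
  forall i, injective (U i) /\ (forall j, (1 <= U i j <= M)%N).

Definition mechanism (p : 'M[R]_(N, M)) : Prop :=
  (forall i j, 0 <= p i j) /\ (forall i, \sum_(j < M) p i j = 1).

Definition PY (PX : 'I_N -> R) (p : 'M[R]_(N, M)) (j : 'I_M) : R :=
  \sum_(i < N) PX i * p i j.

Definition post (PX : 'I_N -> R) (p : 'M[R]_(N, M)) (j : 'I_M) (i : 'I_N) : R :=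
  p i j * PX i / PY PX p j.

(* Pointwise maximal leakage of y_j:  log max_x P_{X|Y=y}(x)/P_X(x).
   All ratios are nonnegative, so 0 is a neutral start for the max. *)
Definition pml (PX : 'I_N -> R) (p : 'M[R]_(N, M)) (j : 'I_M) : R :=
  ln (\big[Num.max/0]_(i < N) (post PX p j i / PX i)).

(* Objective: max over the output support S_Y of the pointwise maximal
   leakage (pml is always >= 0 on S_Y, so 0 is a neutral start). *)
Definition max_pml (PX : 'I_N -> R) (p : 'M[R]_(N, M)) : R :=
  \big[Num.max/0]_(j < M | 0 < PY PX p j) pml PX p j.

Definition Yplus (U : 'I_N -> 'I_M -> nat) (h : nat) (j : 'I_M) : bool :=
  [exists i, (h <= U i j)%N].

Definition feasible (PX : 'I_N -> R) (U : 'I_N -> 'I_M -> nat) (h : nat)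
  (p : 'M[R]_(N, M)) : Prop :=
  mechanism p /\ (forall i j, (U i j < h)%N -> p i j = 0) /\
  (forall j, (0 < PY PX p j) <-> Yplus U h j).

Definition Mstar (U : 'I_N -> 'I_M -> nat) (h : nat) : 'M[R]_(N, M) :=
  \matrix_(i, j) (if (U i j < h)%N then 0 else ((M - h).+1)%:R^-1).

(* -log min_{y in Y^+(h)} sum_{x : u(x,y) >= h} P_X(x)
   (each sum is <= 1, so 1 is a neutral start for the min). *)
Definition opt_value (PX : 'I_N -> R) (U : 'I_N -> 'I_M -> nat) (h : nat) : R :=
  - ln (\big[Num.min/1]_(j < M | Yplus U h j) \sum_(i < N | (h <= U i j)%N) PX i).

End Defs.

From HB Require Import structures.
From mathcomp Require Import all_boot all_order all_algebra.
From mathcomp Require Import all_classical all_reals all_analysis.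
From mathcomp Require Import zify ring lra.
Import Order.TTheory GRing.Theory Num.Theory.
Set Implicit Arguments.
Unset Strict Implicit.
Unset Printing Implicit Defensive.

Local Open Scope ring_scope.

(* Let r_y be the largest posterior-to-prior ratio at an output y of the
   support.  Then p(y|x) <= r_y P_Y(y) for every x, and summing over the
   inputs allowed to release y gives 1 <= r_y P_X{x : u(x,y) >= h}: the
   leakage of y is at least -log of that mass.  As S_Y = Y^+(h), the
   objective dominates the largest of these bounds, which is the claimed
   value.  Every nonzero column of M*(h) is constant, so all its ratios equal
   1 / P_X{x : u(x,y) >= h} and the bounds are attained; its rows sum to 1
   because each row of U has exactly M - h + 1 entries >= h. *)

Lemma count_iota_geq m n h : (m <= h <= m + n)%N ->
  count (leq h) (iota m n) = (m + n - h)%N.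
Proof.
case/andP=> mh hmn; have := count_predC (leq h) (iota m n).
have -> : count (predC (leq h)) (iota m n) = (h - m)%N.
  rewrite -size_filter (eq_filter (a2 := fun i => i < m + (h - m))%N).
    by rewrite filter_iota_ltn ?size_iota // leq_subLR.
  by move=> i; rewrite subnKC //= ltnNge.
rewrite size_iota; lia.
Qed.

Lemma card_geq_inj M (f : 'I_M -> nat) h :
  injective f -> (forall j, (1 <= f j <= M)%N) -> (1 <= h <= M)%N ->
  #|[pred j | (h <= f j)%N]| = (M - h).+1.
Proof.
move=> f_inj f_range /andP[h_gt0 h_leM].
set vals := map f (index_enum 'I_M).
have vals_uniq : uniq vals by rewrite map_inj_uniq ?index_enum_uniq.
have vals_sub : {subset vals <= iota 1 M}.
  by move=> _ /mapP[j _ ->]; rewrite mem_iota add1n ltnS.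
have /(uniq_min_size vals_uniq vals_sub)[_ vals_onto] : (size (iota 1 M) <= size vals)%N.
  by rewrite size_iota size_map -sum1_size sum1_card card_ord.
have vals_perm : perm_eq vals (iota 1 M).
  by apply: uniq_perm; rewrite ?iota_uniq.
rewrite -sum1_card (eq_bigl (fun j => h <= f j)%N) //.
rewrite -(big_map f (leq h) (fun=> 1%N)) -/vals.
by rewrite (perm_big _ vals_perm) sum1_count count_iota_geq ?add1n ?subSn ?h_gt0 ?leqW.
Qed.

Lemma oppr_ln_bigmin (R : realType) (I : finType) (P : pred I) (F : I -> R) :
  (forall i, P i -> 0 < F i <= 1) ->
  - ln (\big[Num.min/1]_(i | P i) F i) = \big[Num.max/0]_(i | P i) - ln (F i).
Proof.
move=> F_range.
suff [_ ->] : (0 < \big[Num.min/1]_(i | P i) F i <= 1) /\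
    \big[Num.max/0]_(i | P i) - ln (F i) = - ln (\big[Num.min/1]_(i | P i) F i)
  by [].
apply: (big_rec2 (fun y x => (0 < x <= 1) /\ y = - ln x)).
  by rewrite ltr01 lexx ln1 oppr0.
move=> i y x /F_range /andP[Fi_gt0 Fi_le1] [/andP[x_gt0 x_le1] ->].
have [Fi_le_x | x_lt_Fi] := leP (F i) x.
  by rewrite Fi_gt0 Fi_le1 max_l // lerN2 ler_ln ?posrE.
by rewrite x_gt0 x_le1 max_r // lerN2 ler_ln ?posrE // ltW.
Qed.

Section Leakage.
Variables (R : realType) (N M : nat) (PX : 'I_N -> R).
Hypothesis PX_gt0 : forall i, 0 < PX i.

Lemma mass_gt0 (A : pred 'I_N) i : A i -> 0 < \sum_(k | A k) PX k.
Proof.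
move=> Ai; rewrite (bigD1 i) //= ltr_pwDl //.
by apply: sumr_ge0 => k _; exact: ltW.
Qed.

Lemma pml_ge_support_mass (p : 'M[R]_(N, M)) j (A : pred 'I_N) :
  (forall i, ~~ A i -> p i j = 0) -> 0 < PY PX p j ->
  - ln (\sum_(i | A i) PX i) <= pml PX p j.
Proof.
move=> p_supp PY_gt0; rewrite /pml.
set r := \big[Num.max/0]_(i < N) _; set S := \sum_(i | A i) PX i.
have r_ge0 : 0 <= r by exact: bigmax_ge_id.
have p_le i : p i j <= r * PY PX p j.
  rewrite -ler_pdivrMr // (_ : p i j / _ = post PX p j i / PX i) ?le_bigmax //.
  by rewrite /post; field; rewrite ?gt_eqF.
have PY_le : PY PX p j <= S * (r * PY PX p j).
  rewrite /PY /S mulr_suml [X in _ <= X]big_mkcond /=; apply: ler_sum => i _.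
  case: ifPn => [_ | /p_supp ->]; last by rewrite mulr0.
  by rewrite ler_wpM2l // ltW.
have Sr_ge1 : 1 <= S * r by rewrite -(ler_pM2r PY_gt0) mul1r -mulrA.
have S_gt0 : 0 < S by nra.
have r_gt0 : 0 < r by nra.
by rewrite -lnV ?posrE // ler_ln ?posrE ?invr_gt0 // -div1r ler_pdivrMr // mulrC.
Qed.

Lemma PY_uniform_column (p : 'M[R]_(N, M)) j (A : pred 'I_N) c :
  (forall i, p i j = if A i then c else 0) -> PY PX p j = c * \sum_(i | A i) PX i.
Proof.
move=> p_col; rewrite /PY mulr_sumr [RHS]big_mkcond /=; apply: eq_bigr => i _.
by rewrite p_col; case: (A i); rewrite ?mulr0 // mulrC.
Qed.

Lemma pml_uniform_column (p : 'M[R]_(N, M)) j (A : pred 'I_N) c :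
  0 < c -> (exists i, A i) -> (forall i, p i j = if A i then c else 0) ->
  pml PX p j = - ln (\sum_(i | A i) PX i).
Proof.
move=> c_gt0 [i0 A_i0] p_col; have S_gt0 := mass_gt0 A_i0.
set S := \sum_(i | A i) PX i.
have ratioE i : post PX p j i / PX i = if A i then S^-1 else 0.
  rewrite /post (PY_uniform_column p_col) p_col -/S.
  by case: (A i); rewrite ?mul0r //; field; rewrite ?gt_eqF.
rewrite /pml (eq_bigr _ (fun i _ => ratioE i)) -lnV ?posrE //; congr ln.
apply/le_anti/andP; split.
  have Sinv_ge0 : 0 <= S^-1 by rewrite invr_ge0 ltW.
  by apply: bigmax_le => [|i _]; last case: (A i).
by apply: (bigmax_sup i0) => //; rewrite A_i0.
Qed.

End Leakage.

Section Threshold.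
Variables (R : realType) (N M : nat) (PX : 'I_N -> R).
Variables (U : 'I_N -> 'I_M -> nat) (h : nat).
Hypotheses (PX_gt0 : forall i, 0 < PX i) (PX_sum1 : \sum_(i < N) PX i = 1).

Definition admissible_mass j := \sum_(i < N | (h <= U i j)%N) PX i.

Lemma admissible_mass_gt0 j : Yplus U h j -> 0 < admissible_mass j.
Proof. by case/existsP=> i; exact: mass_gt0. Qed.

Lemma admissible_mass_le1 j : admissible_mass j <= 1.
Proof.
rewrite -PX_sum1 [leRHS](bigID (fun i => h <= U i j)%N) lerDl /=.
by apply: sumr_ge0 => i _; exact: ltW.
Qed.

Lemma opt_valueE :
  opt_value PX U h = \big[Num.max/0]_(j | Yplus U h j) - ln (admissible_mass j).
Proof.
apply: oppr_ln_bigmin => j Yj.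
by rewrite admissible_mass_gt0 ?admissible_mass_le1.
Qed.

Lemma opt_value_le_feasible (p : 'M[R]_(N, M)) :
  feasible PX U h p -> opt_value PX U h <= max_pml PX p.
Proof.
move=> [_ [p_thresh p_supp]]; rewrite opt_valueE /max_pml.
have suppE : (fun j => 0 < PY PX p j) =1 Yplus U h.
  by move=> j; apply/idP/idP => /p_supp.
rewrite (eq_bigl _ _ suppE); apply: le_bigmax2 => j /p_supp PY_gt0.
by apply: pml_ge_support_mass => // i; rewrite -ltnNge; exact: p_thresh.
Qed.

Lemma Mstar_col j i :
  Mstar R U h i j = if (h <= U i j)%N then ((M - h).+1)%:R^-1 else 0.
Proof. by rewrite mxE ltnNge if_neg. Qed.

Lemma PY_Mstar_gt0 j : (0 < PY PX (Mstar R U h) j) = Yplus U h j.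
Proof.
rewrite (PY_uniform_column PX (Mstar_col j)) -/(admissible_mass j).
have [Yj | /existsPn noY] := boolP (Yplus U h j).
  by rewrite mulr_gt0 ?invr_gt0 ?ltr0n ?admissible_mass_gt0.
by rewrite /admissible_mass big_pred0 ?mulr0 ?ltxx // => i; exact/negbTE.
Qed.

Lemma pml_Mstar j :
  Yplus U h j -> pml PX (Mstar R U h) j = - ln (admissible_mass j).
Proof.
move=> /existsP Yj.
by apply: (pml_uniform_column PX_gt0 _ Yj (Mstar_col j)); rewrite invr_gt0 ltr0n.
Qed.

Lemma max_pml_Mstar : max_pml PX (Mstar R U h) = opt_value PX U h.
Proof.
rewrite opt_valueE /max_pml; apply: eq_big => [j | j]; first exact: PY_Mstar_gt0.
by rewrite PY_Mstar_gt0; exact: pml_Mstar.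
Qed.

Hypotheses (U_perm : utility_matrix U) (h_range : (1 <= h <= M)%N).

Lemma mechanism_Mstar : mechanism (Mstar R U h).
Proof.
split=> [i j | i]; first by rewrite Mstar_col; case: ifP; rewrite // invr_ge0.
have [U_inj U_range] := U_perm i.
rewrite (eq_bigr _ (fun j _ => Mstar_col j i)) -big_mkcond /= sumr_const.
by rewrite card_geq_inj // -[RHS](@mulVf _ (M - h).+1%:R) ?mulr_natr // pnatr_eq0.
Qed.

Lemma feasible_Mstar : feasible PX U h (Mstar R U h).
Proof.
split; first exact: mechanism_Mstar.
split=> [i j | j]; first by rewrite Mstar_col ltnNge => /negbTE ->.
by rewrite PY_Mstar_gt0.
Qed.

End Threshold.

Theorem corollary1 (R : realType) (N M : nat) (PX : 'I_N -> R)
  (U : 'I_N -> 'I_M -> nat) (h : nat) :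
  full_pmf PX -> utility_matrix U -> (1 <= h <= M)%N ->
  (forall p : 'M[R]_(N, M), feasible PX U h p -> opt_value PX U h <= max_pml PX p) /\
  feasible PX U h (Mstar R U h) /\ max_pml PX (Mstar R U h) = opt_value PX U h.
Proof.
move=> [PX_gt0 PX_sum1] U_perm h_range; split; last split.
- exact: opt_value_le_feasible.
- exact: feasible_Mstar.
- exact: max_pml_Mstar.
Qed.
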